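(* Under the standing setting and assumptions (A1)–(A3) described in the context, assume $\mathcal R(X)\neq\emptyset$ for every $X\in\mathcal X$. Then the following are equivalent: (a) $|\mathcal R(X)|=1$ for every $X\in\mathcal X$; (b) $|\mathcal R(X)|=1$ for every $X\in\partial\mathcal A\cap\partial(\mathcal A+\ker(\pi))$; (c) $\partial\mathcal A\cap\partial(\mathcal A+\ker(\pi))\cap(\partial\mathcal A+(\ker(\pi)\setminus\{0\}))=\emptyset$; (d) $\partial\mathcal A\cap(\partial\mathcal A+(\ker(\pi)\setminus\{0\}))\subset\mathrm{int}(\mathcal A+\ker(\pi))$.
   Context: Let $\mathcal X$ be a Hausdorff, first countable, locally convex topological vector space over $\mathbb R$, partially ordered by a partial order $\geq$ with positive cone $\mathcal X_+=\{X\in\mathcal X: X\geq 0\}$. Let $\mathcal M\subset\mathcal X$ be a vector subspace with $1<\dim\mathcal M<\infty$, carrying the relative topology, and let $\pi:\mathcal M\to\mathbb R$ be linear with $\ker(\pi)=\{Z\in\mathcal M:\pi(Z)=0\}$. Standing assumptions: (A1) there is $U\in\mathcal M\cap\mathcal X_+$ with $\pi(U)=1$; (A2) $\mathcal A\subsetneq\mathcal X$ is closed, contains $0$, and satisfies $\mathcal A+\mathcal X_+\subset\mathcal A$; (A3) the map $\rho(X)=\inf\{\pi(Z): Z\in\mathcal M,\ X+Z\in\mathcal A\}$ is finitely valued and continuous on $\mathcal X$. The optimal payoff map is $\mathcal R(X)=\{Z\in\mathcal M: X+Z\in\mathcal A,\ \pi(Z)=\rho(X)\}$; $|\cdot|$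 is cardinality. $\partial$ and $\mathrm{int}$ denote boundary and interior in $\mathcal X$. *)

From HB Require Import structures.
From mathcomp Require Import all_boot all_order all_algebra.
From mathcomp Require Import all_classical all_reals all_analysis.
Set Implicit Arguments. Unset Strict Implicit. Unset Printing Implicit Defensive.
Import Order.TTheory GRing.Theory Num.Theory.
Import numFieldTopology.Exports.
Local Open Scope classical_set_scope.
Local Open Scope ring_scope.

Section Defs.
Context {R : realType} {E : tvsType R}.

Definition first_countable_space : Prop :=
  forall x : E, exists B : nat -> set E,
    (forall n, nbhs x (B n)) /\ (forall U, nbhs x U -> exists n, B n `<=` U).

Definition vector_order (le : E -> E -> Prop) : Prop :=
  [/\ (forall x, le x x),
      (forall x y, le x y -> le y x -> x = y),
      (forall x y z, le x y -> le y z -> le x z),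
      (forall x y z, le x y -> le (x + z) (y + z)) &
      (forall (a : R) x y, 0 <= a -> le x y -> le (a *: x) (a *: y))].

Definition pos_cone (le : E -> E -> Prop) : set E := [set x | le 0 x].

Definition is_vsubspace (M : set E) : Prop :=
  M 0 /\ (forall (a : R) x y, M x -> M y -> M (a *: x + y)).

Definition has_dim (M : set E) (n : nat) : Prop :=
  is_vsubspace M /\
  exists b : 'I_n -> E,
    (forall i, M (b i)) /\
    (forall c : 'I_n -> R, \sum_(i < n) c i *: b i = 0 -> forall i, c i = 0) /\
    (forall x, M x -> exists c : 'I_n -> R, x = \sum_(i < n) c i *: b i).

(* pi : M -> R linear (values outside M are irrelevant) *)
Definition linear_on (M : set E) (pi : E -> R) : Prop :=
  forall (a : R) x y, M x -> M y -> pi (a *: x + y) = a * pi x + pi y.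

Definition kerpi (M : set E) (pi : E -> R) : set E := [set Z | M Z /\ pi Z = 0].

Definition minksum (A B : set E) : set E :=
  [set x | exists a b, A a /\ B b /\ x = a + b].

Definition bdry (S : set E) : set E := closure S `\` interior S.

Definition price_set (M A : set E) (pi : E -> R) (X : E) : set R :=
  [set r | exists Z, M Z /\ A (X + Z) /\ r = pi Z].

Definition rho (M A : set E) (pi : E -> R) (X : E) : R := inf (price_set M A pi X).

Definition optR (M A : set E) (pi : E -> R) (X : E) : set E :=
  [set Z | M Z /\ A (X + Z) /\ pi Z = rho M A pi X].

End Defs.

From HB Require Import structures.
From mathcomp Require Import all_boot all_order all_algebra.
From mathcomp Require Import all_classical all_reals all_analysis.
From mathcomp Require Import lra.
Set Implicit Arguments.
Unset Strict Implicit.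
Unset Printing Implicit Defensive.
Import Order.TTheory GRing.Theory Num.Theory.
Import numFieldTopology.Exports.
Local Open Scope classical_set_scope.
Local Open Scope ring_scope.

(* Everything follows from cash additivity, rho (X + Z) = rho X - pi Z for
   Z in M: it identifies A + ker pi with {rho <= 0}, its interior with
   {rho < 0} (push along -U) and its boundary with {rho = 0}.  Optimal payoffs
   translate along M, so uniqueness need only be checked at points X of
   bd A with rho X = 0; there 0 is optimal, and a second optimal payoff Z != 0
   is exactly a decomposition X = (X + Z) + (-Z) with X + Z in bd A and
   -Z in ker pi \ {0}. *)

Lemma nbhs_ray (R : realType) (E : tvsType R) (X w : E) (S : set E) :
  nbhs X S -> exists2 e : R, 0 < e & S (X + e *: w).
Proof.
move=> XS.
have /= := add_continuous (X, 0) S.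
rewrite addr0 => /(_ XS) [] [B1 B2] /= [B1X B20] BS.
have /= := scale_continuous ((0:R), w) B2.
rewrite scale0r => /(_ B20) [] [C1 C2] /= [/nbhs_ballP [e /= e0 He] C2w] CB.
exists (e / 2); first by rewrite divr_gt0.
apply: (BS (X, e / 2 *: w)); split => /=; first exact: nbhs_singleton.
apply: (CB (e / 2, w)); split => /=; last exact: nbhs_singleton.
by apply: He; rewrite /ball /= sub0r normrN gtr0_norm ?divr_gt0 //; lra.
Qed.

Lemma continuous_nbhs_open_preimage (T U : topologicalType) (f : T -> U)
    (S : set U) (X : T) :
  continuous f -> open S -> S (f X) -> nbhs X (f @^-1` S).
Proof. by move=> fC oS SfX; apply: fC; apply: open_nbhs_nbhs. Qed.

Section AcceptanceSet.
Variables (R : realType) (E : tvsType R) (le : E -> E -> Prop).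
Variables (M : set E) (pi : E -> R) (A : set E) (U : E).
Hypotheses (le_order : vector_order le) (M_sub : is_vsubspace M).
Hypothesis pi_lin : linear_on M pi.
Hypotheses (MU : M U) (U_pos : pos_cone le U) (piU : pi U = 1).
Hypotheses (A_closed : closed A) (A_monotone : minksum A (pos_cone le) `<=` A).
Hypothesis price_inf : forall X, has_inf (price_set M A pi X).
Hypothesis rho_cont : continuous (rho M A pi).
Hypothesis optR_neq0 : forall X, optR M A pi X !=set0.

Lemma vsubspaceD x y : M x -> M y -> M (x + y).
Proof. by move=> Mx My; have := M_sub.2 1 x y Mx My; rewrite scale1r. Qed.

Lemma vsubspaceZ a x : M x -> M (a *: x).
Proof. by move=> Mx; have := M_sub.2 a x 0 Mx M_sub.1; rewrite addr0. Qed.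

Lemma vsubspaceN x : M x -> M (- x).
Proof. by rewrite -scaleN1r; apply: vsubspaceZ. Qed.

Lemma vsubspaceB x y : M x -> M y -> M (x - y).
Proof. by move=> Mx My; exact: vsubspaceD Mx (vsubspaceN My). Qed.

Lemma linear_on0 : pi 0 = 0.
Proof. by have := pi_lin 1 M_sub.1 M_sub.1; rewrite scale1r addr0; lra. Qed.

Lemma linear_onD x y : M x -> M y -> pi (x + y) = pi x + pi y.
Proof. by move=> Mx My; have := pi_lin 1 Mx My; rewrite scale1r mul1r. Qed.

Lemma linear_onZ a x : M x -> pi (a *: x) = a * pi x.
Proof.
by move=> Mx; have := pi_lin a Mx M_sub.1; rewrite addr0 linear_on0 addr0.
Qed.

Lemma linear_onN x : M x -> pi (- x) = - pi x.
Proof. by move=> Mx; rewrite -scaleN1r linear_onZ // mulN1r. Qed.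

Local Notation rhoA := (rho M A pi).
Local Notation optA := (optR M A pi).
Local Notation K := (kerpi M pi).
Local Notation AK := (minksum A (kerpi M pi)).

Lemma rho_le_price X W : M W -> A (X + W) -> rhoA X <= pi W.
Proof. by move=> MW AXW; apply: (ge_inf (price_inf X).2); exists W. Qed.

Lemma rho_translate X Z : M Z -> rhoA (X + Z) = rhoA X - pi Z.
Proof.
move=> MZ.
have [Z0 [MZ0 [AZ0 piZ0]]] := optR_neq0 X.
have [Z1 [MZ1 [AZ1 piZ1]]] := optR_neq0 (X + Z).
have le1 : rhoA (X + Z) <= rhoA X - pi Z.
  rewrite -piZ0 -linear_onN // -linear_onD //; last exact: vsubspaceN.
  by apply: rho_le_price; [exact: vsubspaceB | rewrite addrACA subrr addr0].
have le2 : rhoA X <= rhoA (X + Z) + pi Z.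
  rewrite -piZ1 -linear_onD //.
  by apply: rho_le_price; [exact: vsubspaceD | rewrite addrA addrAC].
lra.
Qed.

Lemma optR_translate X Z W : M Z -> optA (X + Z) W <-> optA X (W + Z).
Proof.
move=> MZ; split=> [[MW [AW piW]] | [MWZ [AWZ piWZ]]].
  split; first exact: vsubspaceD.
  split; first by rewrite addrA (addrAC X).
  by rewrite linear_onD // piW rho_translate // subrK.
have MW : M W by rewrite -(addrK Z W); apply: vsubspaceB.
split=> //; split; first by rewrite addrAC -addrA.
by rewrite rho_translate // -piWZ linear_onD // addrK.
Qed.

Lemma optR_set1_translate X Z W : M Z ->
  optA (X + Z) = [set W] -> optA X = [set W + Z].
Proof.
move=> MZ optW; apply/seteqP; split=> V.
  move=> optV; have : optA (X + Z) (V - Z) by apply/optR_translate; rewrite ?subrK.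
  by rewrite optW => /= <-; rewrite subrK.
by move=> /= ->; apply/optR_translate => //; rewrite optW.
Qed.

Lemma rho_le0 X : A X -> rhoA X <= 0.
Proof.
by move=> AX; rewrite -linear_on0; apply: rho_le_price M_sub.1 _; rewrite addr0.
Qed.

Lemma AK_rho_le0 X : AK X <-> rhoA X <= 0.
Proof.
split=> [[a [k [Aa [[Mk pik] ->]]]] | rhoX_le0].
  by rewrite rho_translate // pik subr0; exact: rho_le0.
have [Z [MZ [AXZ piZ]]] := optR_neq0 X.
pose P := - rhoA X *: U.
have P_pos : le 0 P.
  have [_ _ _ _ le_scale] := le_order.
  by rewrite -(scaler0 _ (- rhoA X)); apply: le_scale; rewrite ?oppr_ge0.
have MP : M P by exact: vsubspaceZ.
have AXZP : A (X + (Z + P)) by rewrite addrA; apply: A_monotone; exists (X + Z), P.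
have piZP : pi (Z + P) = 0 by rewrite linear_onD // linear_onZ // piU piZ; lra.
exists (X + (Z + P)), (- (Z + P)); split=> //; split; last by rewrite addrK.
split; first by apply/vsubspaceN/vsubspaceD.
by rewrite linear_onN ?piZP ?oppr0 //; exact: vsubspaceD.
Qed.

(* Some X - e U lies in S, and rho (X - e U) = rho X + e. *)
Lemma rho_lt0_of_nbhs X S : nbhs X S ->
  (forall Y, S Y -> rhoA Y <= 0) -> rhoA X < 0.
Proof.
move=> XS S_le0; have [e e_gt0 SXe] := nbhs_ray (- U) XS.
have MeU : M (e *: - U) by apply/vsubspaceZ/vsubspaceN.
have := S_le0 _ SXe; rewrite rho_translate // linear_onZ ?linear_onN //.
  by rewrite piU; lra.
exact: vsubspaceN.
Qed.

Lemma interior_AK X : AK° X <-> rhoA X < 0.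
Proof.
split=> [AKX | rhoX_lt0].
  by apply: (rho_lt0_of_nbhs AKX) => Y /AK_rho_le0.
have := continuous_nbhs_open_preimage rho_cont (@open_lt _ 0) rhoX_lt0.
by apply: filterS => Y /= rhoY_lt0; apply/AK_rho_le0; lra.
Qed.

Lemma bdry_AK X : bdry AK X <-> rhoA X = 0.
Proof.
split=> [[clX nintX] | rhoX0].
  apply/eqP; rewrite eq_le; apply/andP; split; last first.
    by rewrite leNgt; apply/negP => /interior_AK.
  rewrite leNgt; apply/negP => rhoX_gt0.
  have := continuous_nbhs_open_preimage rho_cont (@open_gt _ 0) rhoX_gt0.
  by move=> /clX [Y [/AK_rho_le0 + /= rhoY_gt0]]; lra.
split; first by apply: subset_closure; apply/AK_rho_le0; rewrite rhoX0.
by move=> /interior_AK; rewrite rhoX0 ltxx.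
Qed.

Lemma bdry_A_sub : bdry A `<=` A.
Proof. by move=> X [clX _]; rewrite ((closure_id A).1 A_closed). Qed.

Lemma bdry_A_of_rho0 X : A X -> rhoA X = 0 -> bdry A X.
Proof.
move=> AX rhoX0; split; first exact: subset_closure.
by move=> /rho_lt0_of_nbhs /(_ rho_le0); rewrite rhoX0 ltxx.
Qed.

Lemma optR0 X : A X -> rhoA X = 0 -> optA X 0.
Proof.
by move=> AX rhoX0; split; rewrite ?addr0 ?linear_on0 ?rhoX0 //; exact: M_sub.1.
Qed.

Lemma optR_uniq_bdryP :
  (forall X, exists Z, optA X = [set Z]) <->
  (forall X, (bdry A `&` bdry AK) X -> exists Z, optA X = [set Z]).
Proof.
split=> [uniq X _ | uniq_bd X]; first exact: uniq.
pose Y := X + rhoA X *: U.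
have MrU : M (rhoA X *: U) by exact: vsubspaceZ.
have rhoY0 : rhoA Y = 0 by rewrite rho_translate // linear_onZ // piU mulr1 subrr.
have [Z [MZ [AYZ piZ]]] := optR_neq0 Y.
have rhoYZ0 : rhoA (Y + Z) = 0 by rewrite rho_translate // piZ rhoY0 subrr.
have bdYZ : (bdry A `&` bdry AK) (Y + Z).
  by split; [exact: bdry_A_of_rho0 | exact/bdry_AK].
have [W optW] := uniq_bd _ bdYZ.
exists (W + Z + rhoA X *: U).
by apply: optR_set1_translate MrU _; apply: optR_set1_translate MZ optW.
Qed.

Lemma optR_uniq_bdry_disjointP :
  (forall X, (bdry A `&` bdry AK) X -> exists Z, optA X = [set Z]) <->
  bdry A `&` bdry AK `&` minksum (bdry A) (K `\ 0) = set0.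
Proof.
split=> [uniq_bd | disj X [bdAX bdAKX]].
  rewrite -subset0 => X [[bdAX bdAKX] [a [k [bdAa [[[Mk pik] k_neq0] eX]]]]].
  have rhoX0 := (bdry_AK _).1 bdAKX.
  have [Z optZ] := uniq_bd _ (conj bdAX bdAKX).
  have opt0 := optR0 (bdry_A_sub bdAX) rhoX0.
  have optk : optA X (- k).
    split; first exact: vsubspaceN.
    split; first by rewrite eX addrK; exact: bdry_A_sub.
    by rewrite linear_onN // pik rhoX0 oppr0.
  rewrite optZ /= in opt0 optk.
  by apply: k_neq0; rewrite -[k]opprK optk -opt0 oppr0.
have rhoX0 := (bdry_AK _).1 bdAKX.
exists 0; apply/seteqP; split=> [V [MV [AXV piV]] | V /= ->]; last first.
  exact: optR0 (bdry_A_sub bdAX) rhoX0.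
apply: contrapT => V_neq0.
suff : (set0 : set E) X by [].
rewrite -disj; split=> //; exists (X + V), (- V); split.
  by apply: bdry_A_of_rho0 => //; rewrite rho_translate // piV subrr.
split; last by rewrite addrK.
split; first by split; [exact: vsubspaceN | rewrite linear_onN // piV rhoX0 oppr0].
by move=> /= /eqP; rewrite oppr_eq0 => /eqP.
Qed.

Lemma bdry_disjoint_interiorP :
  bdry A `&` bdry AK `&` minksum (bdry A) (K `\ 0) = set0 <->
  bdry A `&` minksum (bdry A) (K `\ 0) `<=` interior AK.
Proof.
split=> [disj X [bdAX shiftX] | sub_int].
  apply/interior_AK.
  have := rho_le0 (bdry_A_sub bdAX); rewrite le_eqVlt => /orP [/eqP rhoX0 | //].
  suff : (set0 : set E) X by [].
  by rewrite -disj; split=> //; split=> //; apply/bdry_AK.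
rewrite -subset0 => X [[bdAX bdAKX] shiftX].
have /interior_AK := sub_int X (conj bdAX shiftX).
by rewrite (bdry_AK X).1 // ltxx.
Qed.

End AcceptanceSet.

Theorem mainTheorem11 (R : realType) (E : tvsType R)
  (le : E -> E -> Prop) (M : set E) (pi : E -> R) (A : set E) :
  hausdorff_space E ->
  first_countable_space (E := E) ->
  vector_order le ->
  is_vsubspace M ->
  (exists n : nat, (1 < n)%N /\ has_dim M n) ->
  linear_on M pi ->
  (* (A1) *)
  (exists U, M U /\ pos_cone le U /\ pi U = 1) ->
  (* (A2) *)
  closed A -> A 0 -> A <> setT -> minksum A (pos_cone le) `<=` A ->
  (* (A3) *)
  (forall X, has_inf (price_set M A pi X)) ->
  continuous (rho M A pi) ->
  (* standing hypothesis of the theorem *)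
  (forall X, optR M A pi X !=set0) ->
  let K := kerpi M pi in
  let K0 := K `\ 0 in
  let AK := minksum A K in
  [/\ ((forall X, exists Z, optR M A pi X = [set Z]) <->
       (forall X, (bdry A `&` bdry AK) X -> exists Z, optR M A pi X = [set Z])),
      ((forall X, (bdry A `&` bdry AK) X -> exists Z, optR M A pi X = [set Z]) <->
       bdry A `&` bdry AK `&` minksum (bdry A) K0 = set0) &
      (bdry A `&` bdry AK `&` minksum (bdry A) K0 = set0 <->
       bdry A `&` minksum (bdry A) K0 `<=` interior AK)].
Proof.
move=> _ _ le_order M_sub _ pi_lin [U [MU [U_pos piU]]] A_closed _ _ A_monotone
  price_inf rho_cont optR_neq0 K K0 AK.
split.
- exact: optR_uniq_bdryP le_order M_sub pi_lin MU U_pos piU A_monotone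
    price_inf rho_cont optR_neq0.
- exact: optR_uniq_bdry_disjointP le_order M_sub pi_lin MU U_pos piU A_closed
    A_monotone price_inf rho_cont optR_neq0.
- exact: bdry_disjoint_interiorP le_order M_sub pi_lin MU U_pos piU A_closed
    A_monotone price_inf rho_cont optR_neq0.
Qed.
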